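(* Let $\mathcal{X}$ be a sample space (e.g. $\mathbb{R}^d$), let $c:\mathcal{X}\times\mathcal{X}\to[0,\infty)$ be a cost function with $c(x,x)=0$ for all $x$, and let $\lambda>0$. Let $\mu,\mu_c,\nu$ be probability measures on $\mathcal{X}$, let $\epsilon\in[0,1)$ and set $\tilde\mu=(1-\epsilon)\mu+\epsilon\mu_c$. Then \[ \mathrm{ROBOT}(\tilde\mu,\nu)\le \min\Big\{\mathrm{OT}(\mu,\nu)+\lambda\,\epsilon\,\|\mu-\mu_c\|_{\mathrm{TV}},\ \ \lambda\|\tilde\mu-\nu\|_{\mathrm{TV}},\ \ \mathrm{OT}(\tilde\mu,\nu)\Big\}. \]
   Context: For probability measures $\mu,\nu$ on $\mathcal{X}$, $\mathrm{OT}(\mu,\nu)=\min_{\Pi}\mathbb{E}_{(X_1,X_2)\sim\Pi}[c(X_1,X_2)]$, the minimum over all couplings $\Pi$ of $\mu$ and $\nu$ (probability measures on $\mathcal{X}\times\mathcal{X}$ with marginals $\mu$ and $\nu$). For a signed measure $s$, the total-variation norm is $\|s\|_{\mathrm{TV}}=\int\frac12|s(\mathrm{d}x)|$. The robust optimal transport value is \[ \mathrm{ROBOT}(\mu,\nu)=\inf_{\pi,s}\ \iint c(x,y)\,\pi(\mathrm{d}x,\mathrm{d}y)+\lambda\|s\|_{\mathrm{TV}}, \] where the infimum is over signed measures $s$ on $\mathcal{X}$ with $\int s(\mathrm{d}x)=0$ and $\mu+s\ge 0$, and nonnegative measures $\pi$ on $\mathcal{X}\times\mathcal{X}$ whose first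 marginal is $\mu+s$ and whose second marginal is $\nu$. *)

From HB Require Import structures.
From mathcomp Require Import all_boot all_order all_algebra.
From mathcomp Require Import all_classical all_reals all_analysis.
Import Order.TTheory GRing.Theory Num.Theory.
Import numFieldNormedType.Exports.

Set Implicit Arguments.
Unset Strict Implicit.
Unset Printing Implicit Defensive.

Local Open Scope classical_set_scope.
Local Open Scope ring_scope.
Local Open Scope ereal_scope.

Section ROBOTDefs.
Context {d : measure_display} {X : measurableType d} {R : realType}.

Definition is_coupling (mu nu : set X -> \bar R)
    (pi : {measure set (X * X)%type -> \bar R}) : Prop :=
  (forall A, measurable A -> pi (A `*` [set: X]) = mu A) /\
  (forall B, measurable B -> pi ([set: X] `*` B) = nu B).

Definition OT (c : X * X -> R) (mu nu : set X -> \bar R) : \bar R :=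
  ereal_inf [set \int[pi]_z (c z)%:E | pi in is_coupling mu nu].

Definition TV (s : set X -> \bar R) : \bar R :=
  (2^-1)%:E * ereal_sup [set v | exists (n : nat) (A : 'I_n -> set X),
     (forall i, measurable (A i)) /\
     (forall i j, i != j -> A i `&` A j = set0) /\
     \bigcup_i A i = [set: X] /\
     v = \sum_(i < n) `| s (A i) |].

Definition ROBOT (c : X * X -> R) (lam : R) (mu nu : set X -> \bar R) : \bar R :=
  ereal_inf [set v | exists (pi : {measure set (X * X)%type -> \bar R})
                            (s : {charge set X -> \bar R}),
     s [set: X] = 0 /\
     (forall A, measurable A -> 0 <= mu A + s A) /\
     (forall A, measurable A -> pi (A `*` [set: X]) = mu A + s A) /\
     (forall B, measurable B -> pi ([set: X] `*` B) = nu B) /\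
     v = \int[pi]_z (c z)%:E + lam%:E * TV s].

End ROBOTDefs.

From HB Require Import structures.
From mathcomp Require Import all_boot all_order all_algebra.
From mathcomp Require Import all_classical all_reals all_analysis.
From mathcomp Require Import measurable_realfun ring.
Import Order.TTheory GRing.Theory Num.Theory.
Import numFieldNormedType.Exports.
Local Open Scope classical_set_scope.
Local Open Scope ring_scope.
Local Open Scope ereal_scope.

(* Each bound comes from a feasible point of the ROBOT problem.  The charge
   s = eps (mu - mu_c) moves the contaminated mu_t back to mu, so every
   coupling of mu and nu is admissible at the extra price
   lam eps ||mu - mu_c||_TV.  The charge s = nu - mu_t moves mu_t onto nu,
   and the diagonal coupling of nu with itself costs nothing since
   c(x, x) = 0.  Finally s = 0 recovers plain optimal transport. *)

Lemma lb_ereal_infD (R : realType) (S : set (\bar R)) (k y : \bar R) :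
  (forall x, S x -> 0 <= x) -> 0 <= k ->
  (forall x, S x -> y <= x + k) -> y <= ereal_inf S + k.
Proof.
move=> S_ge0; case: k => [r| |] // k_ge0 yS.
- rewrite -leeBlDr //; apply: le_ereal_inf_tmp => x Sx.
  by rewrite leeBlDr //; exact: yS.
- have inf_ge0 : 0 <= ereal_inf S by exact: le_ereal_inf_tmp.
  by rewrite addey ?leey //; case: (ereal_inf S) inf_ge0.
Qed.

Section total_variation.
Context {d : measure_display} {X : measurableType d} {R : realType}.
Implicit Types s t : set X -> \bar R.

Lemma TV_ge0 s : 0 <= TV s.
Proof.
rewrite /TV; apply: mule_ge0; first by rewrite lee_fin.
apply: le_trans (ereal_sup_ubound _); last first.
  exists 1%N, (fun=> setT); split => //; split.
    by move=> i j; rewrite !ord1 eqxx.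
  by split; [apply/seteqP; split => x //= _; exists ord0 | reflexivity].
by rewrite big_ord1.
Qed.

Lemma TV_le_scale s t (k : R) : (0 <= k)%R ->
  (forall A, measurable A -> `|s A| <= k%:E * `|t A|) -> TV s <= k%:E * TV t.
Proof.
move=> k_ge0 st; rewrite /TV muleCA.
apply: lee_wpmul2l; first by rewrite lee_fin.
apply: ge_ereal_sup => _ [n [A [mA [dA [cA ->]]]]].
apply: (@le_trans _ _ (\sum_(i < n) k%:E * `|t (A i)|)).
  by apply: lee_sum => i _; exact: st.
rewrite -ge0_sume_distrr //; apply: lee_wpmul2l; first by rewrite lee_fin.
by apply: ereal_sup_ubound; exists n, A.
Qed.

Lemma TV_eq0 s : (forall A, measurable A -> s A = 0) -> TV s = 0.
Proof.
move=> s0; apply/eqP; rewrite eq_le TV_ge0 andbT.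
by rewrite -(mul0e (TV s)) TV_le_scale // => A mA; rewrite s0 // abse0 mul0e.
Qed.

End total_variation.

Section diagonal_coupling.
Context {d : measure_display} {X : measurableType d} {R : realType}.

Let measurable_diag : measurable_fun [set: X] (fun x : X => (x, x)).
Proof. exact: measurable_fun_pair. Qed.

Definition diag_coupling (nu : {measure set X -> \bar R}) :
  {measure set (X * X)%type -> \bar R}.
Proof.
by refine (pushforward nu (fun x : X => (x, x))); exact: measurable_diag.
Defined.

Lemma diag_coupling_is_coupling (nu : {measure set X -> \bar R}) :
  is_coupling nu nu (diag_coupling nu).
Proof.
by split=> A _; congr (nu _); apply/seteqP; split=> x /= => [[] | ].
Qed.

Lemma integral_diag_coupling (nu : {measure set X -> \bar R}) (c : X * X -> R) :
  measurable_fun [set: X * X] c -> (forall z, (0 <= c z)%R) ->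
  (forall x, c (x, x) = 0%R) -> \int[diag_coupling nu]_z (c z)%:E = 0.
Proof.
move=> c_meas c_ge0 c_diag; rewrite ge0_integral_pushforward //=.
- by apply: integral0_eq => x _ /=; rewrite c_diag.
- exact/measurable_EFinP.
- by move=> z _; rewrite lee_fin.
Qed.

End diagonal_coupling.

Section charge_difference.
Context {d : measure_display} {X : measurableType d} {R : realType}.
Variables m1 m2 : {charge set X -> \bar R}.

Definition csub : {charge set X -> \bar R} := cadd m1 (copp m2).

Lemma csubE A : csub A = m1 A - m2 A.
Proof. by []. Qed.

Lemma csub_addl A : measurable A -> m2 A + csub A = m1 A.
Proof. by move=> mA; rewrite csubE addeC subeK // fin_num_measure. Qed.

Lemma csub_setT : m1 [set: X] = m2 [set: X] -> csub [set: X] = 0.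
Proof. by move=> m12; rewrite csubE m12 subee // fin_num_measure. Qed.

Lemma TV_csub : TV csub <= TV (fun A => m2 A - m1 A).
Proof.
rewrite -[leRHS]mul1e; apply: TV_le_scale => // A mA.
rewrite mul1e csubE -[leLHS]abseN oppeB; last first.
  by rewrite fin_num_adde_defl // fin_numN fin_num_measure.
by rewrite addeC.
Qed.

End charge_difference.

Section robot_bounds.
Context {d : measure_display} {X : measurableType d} {R : realType}.
Context {c : X * X -> R} {lam : R}.
Hypothesis c_ge0 : forall z, (0 <= c z)%R.
Hypothesis lam_ge0 : (0 <= lam)%R.

Lemma OT_ge0 (mu nu : set X -> \bar R) : 0 <= OT c mu nu.
Proof.
apply: le_ereal_inf_tmp => _ [pi _ <-].
by apply: integral_ge0 => z _; rewrite lee_fin.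
Qed.

Lemma OT_self (nu : {measure set X -> \bar R}) :
  measurable_fun [set: X * X] c -> (forall x, c (x, x) = 0%R) ->
  OT c nu nu = 0.
Proof.
move=> c_meas c_diag; apply/eqP; rewrite eq_le OT_ge0 andbT.
rewrite -(integral_diag_coupling nu c c_meas c_ge0 c_diag).
by apply: ereal_inf_lbound; exists (diag_coupling nu) => //;
  exact: diag_coupling_is_coupling.
Qed.

Lemma ROBOT_le_OT_TV (mu mu' nu : set X -> \bar R)
    (s : {charge set X -> \bar R}) :
  s [set: X] = 0 ->
  (forall A, measurable A -> mu A + s A = mu' A) ->
  (forall A, measurable A -> 0 <= mu' A) ->
  ROBOT c lam mu nu <= OT c mu' nu + lam%:E * TV s.
Proof.
move=> s0 mus mu'_ge0; apply: lb_ereal_infD.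
- by move=> _ [pi _ <-]; apply: integral_ge0 => z _; rewrite lee_fin.
- by apply: mule_ge0; [rewrite lee_fin | exact: TV_ge0].
move=> _ [pi [pi1 pi2] <-]; apply: ereal_inf_lbound.
exists pi, s; split=> //; split; first by move=> A mA; rewrite mus // mu'_ge0.
by split=> // A mA; rewrite mus // pi1.
Qed.

Lemma ROBOT_le_OT (mu nu : set X -> \bar R) :
  (forall A, measurable A -> 0 <= mu A) -> ROBOT c lam mu nu <= OT c mu nu.
Proof.
move=> mu_ge0.
rewrite -[leRHS]adde0 -(mule0 lam%:E) -(TV_eq0 (@czero _ X R)) //.
by apply: ROBOT_le_OT_TV => // A _; rewrite adde0.
Qed.

Lemma ROBOT_le_TV (mu : set X -> \bar R) (nu : {measure set X -> \bar R})
    (s : {charge set X -> \bar R}) :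
  measurable_fun [set: X * X] c -> (forall x, c (x, x) = 0%R) ->
  s [set: X] = 0 -> (forall A, measurable A -> mu A + s A = nu A) ->
  ROBOT c lam mu nu <= lam%:E * TV s.
Proof.
move=> c_meas c_diag s0 mus; rewrite -[leRHS]add0e -(OT_self nu c_meas c_diag).
exact: ROBOT_le_OT_TV.
Qed.

End robot_bounds.

Section contamination.
Context {d : measure_display} {X : measurableType d} {R : realType}.
Variables (eps : R) (mu mu_c : probability X R).

Definition mixture : {charge set X -> \bar R} :=
  cadd (cscale (1 - eps) (charge_of_finite_measure mu))
       (cscale eps (charge_of_finite_measure mu_c)).

Definition decontamination : {charge set X -> \bar R} :=
  cscale eps
    (csub (charge_of_finite_measure mu) (charge_of_finite_measure mu_c)).

Lemma mixtureE A : mixture A = (1 - eps)%:E * mu A + eps%:E * mu_c A.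
Proof. by []. Qed.

Lemma decontaminationE A : decontamination A = eps%:E * (mu A - mu_c A).
Proof. by []. Qed.

Lemma mixture_ge0 A : (0 <= eps <= 1)%R -> measurable A -> 0 <= mixture A.
Proof.
move=> /andP[eps_ge0 eps_le1] mA; rewrite mixtureE.
by apply: adde_ge0; apply: mule_ge0; rewrite ?lee_fin ?subr_ge0.
Qed.

Lemma mixture_setT : mixture [set: X] = 1.
Proof. by rewrite mixtureE !probability_setT !mule1 -EFinD subrK. Qed.

Lemma decontamination_setT : decontamination [set: X] = 0.
Proof. by rewrite decontaminationE !probability_setT subee // mule0. Qed.

Lemma mixture_decontaminationE A :
  measurable A -> mixture A + decontamination A = mu A.
Proof.
move=> mA; rewrite mixtureE decontaminationE -(fineK (fin_num_measure mu _ mA)).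
rewrite -(fineK (fin_num_measure mu_c _ mA)) -EFinN -!EFinD.
by congr EFin; ring.
Qed.

Lemma TV_decontamination : (0 <= eps)%R ->
  TV decontamination <= eps%:E * TV (fun A => mu A - mu_c A).
Proof.
move=> eps_ge0; apply: TV_le_scale => // A _.
by rewrite decontaminationE abseM gee0_abs ?lee_fin.
Qed.

End contamination.

Theorem theorem1 (d : measure_display) (X : measurableType d) (R : realType)
  (c : X * X -> R) (lam eps : R)
  (mu mu_c nu : probability X R)
  (c_meas : measurable_fun [set: X * X] c)
  (c_ge0 : forall z, (0 <= c z)%R)
  (c_diag : forall x, c (x, x) = 0%R)
  (lam_gt0 : (0 < lam)%R)
  (eps_ge0 : (0 <= eps)%R) (eps_lt1 : (eps < 1)%R) :
  let mu_t : set X -> \bar R :=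
    fun A => (1 - eps)%:E * mu A + eps%:E * mu_c A in
  ROBOT c lam mu_t nu <=
    Order.min (OT c mu nu + lam%:E * eps%:E * TV (fun A => mu A - mu_c A))
      (Order.min (lam%:E * TV (fun A => mu_t A - nu A))
                 (OT c mu_t nu)).
Proof.
cbv zeta; rewrite -[fun A => _ + _]/(mixture eps mu mu_c : set X -> \bar R).
have lam_ge0 := ltW lam_gt0.
rewrite !le_min; apply/and3P; split.
- apply: le_trans (ROBOT_le_OT_TV c_ge0 lam_ge0 _ _ _ _
    (decontamination_setT eps mu mu_c) (mixture_decontaminationE eps mu mu_c)
    (fun A _ => measure_ge0 mu A)) _.
  rewrite leeD2l // -muleA lee_wpmul2l ?lee_fin //.
  exact: TV_decontamination.
- pose s := csub (charge_of_finite_measure nu) (mixture eps mu mu_c).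
  have s0 : s [set: X] = 0.
    by apply: csub_setT; rewrite mixture_setT [LHS]probability_setT.
  apply: le_trans (ROBOT_le_TV c_ge0 lam_ge0 _ nu s c_meas c_diag s0
    (csub_addl _ _)) _.
  by rewrite lee_wpmul2l ?lee_fin //; exact: TV_csub.
- apply: ROBOT_le_OT => // A mA.
  by rewrite mixture_ge0 // eps_ge0 ltW.
Qed.
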